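(* Every strongly regular graph with girth five has no quantum symmetry. In particular, the Hoffman–Singleton graph has no quantum symmetry.
   Context: A $k$-regular graph on $n$ vertices is strongly regular with parameters $(n,k,\lambda,\mu)$ if adjacent vertices have exactly $\lambda$ common neighbors and non-adjacent distinct vertices have exactly $\mu$ common neighbors. The girth is the length of a shortest cycle. The Hoffman–Singleton graph is the strongly regular graph with parameters $(50,7,0,1)$. For a finite simple undirected graph $\Gamma=(V,E)$ with $V=\{1,\dots,n\}$, $C(G_{aut}^+(\Gamma))$ is the universal unital $C^*$-algebra generated by $u_{ij}$, $1\le i,j\le n$, with relations: (R1) $u_{ij}=u_{ij}^*=u_{ij}^2$; (R2) $\sum_{l} u_{il}=1=\sum_{l} u_{li}$ for all $i$; (R3) $u_{ij}u_{kl}=u_{kl}u_{ij}=0$ whenever exactly one of $(i,k)\in E$, $(j,l)\in E$ holds. $\Gamma$ has no quantum symmetry if $C(G_{aut}^+(\Gamma))$ is commutative. *)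

From mathcomp Require Import all_boot.
From Stdlib Require Import Reals.

Set Implicit Arguments.
Unset Strict Implicit.
Unset Printing Implicit Defensive.

Record Cx := mkCx { cre : R; cim : R }.
Definition Cadd (a b : Cx) : Cx := mkCx (cre a + cre b)%R (cim a + cim b)%R.
Definition Cmul (a b : Cx) : Cx :=
  mkCx (cre a * cre b - cim a * cim b)%R (cre a * cim b + cim a * cre b)%R.
Definition Cconj (a : Cx) : Cx := mkCx (cre a) (- cim a)%R.
Definition Cone : Cx := mkCx 1%R 0%R.
Definition Cmod (a : Cx) : R := sqrt (cre a * cre a + cim a * cim a)%R.

Record CStarAlgebra := {
  ca_car :> Type;
  ca_zero : ca_car;
  ca_one : ca_car;
  ca_add : ca_car -> ca_car -> ca_car;
  ca_opp : ca_car -> ca_car;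
  ca_mul : ca_car -> ca_car -> ca_car;
  ca_scal : Cx -> ca_car -> ca_car;
  ca_star : ca_car -> ca_car;
  ca_norm : ca_car -> R;
  ca_addA : forall x y z, ca_add x (ca_add y z) = ca_add (ca_add x y) z;
  ca_addC : forall x y, ca_add x y = ca_add y x;
  ca_add0 : forall x, ca_add ca_zero x = x;
  ca_addN : forall x, ca_add x (ca_opp x) = ca_zero;
  ca_scalDr : forall a x y, ca_scal a (ca_add x y) = ca_add (ca_scal a x) (ca_scal a y);
  ca_scalDl : forall a b x, ca_scal (Cadd a b) x = ca_add (ca_scal a x) (ca_scal b x);
  ca_scalM : forall a b x, ca_scal (Cmul a b) x = ca_scal a (ca_scal b x);
  ca_scal1 : forall x, ca_scal Cone x = x;
  ca_mulA : forall x y z, ca_mul x (ca_mul y z) = ca_mul (ca_mul x y) z;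
  ca_mul1l : forall x, ca_mul ca_one x = x;
  ca_mul1r : forall x, ca_mul x ca_one = x;
  ca_mulDl : forall x y z, ca_mul (ca_add x y) z = ca_add (ca_mul x z) (ca_mul y z);
  ca_mulDr : forall x y z, ca_mul x (ca_add y z) = ca_add (ca_mul x y) (ca_mul x z);
  ca_scalMl : forall a x y, ca_scal a (ca_mul x y) = ca_mul (ca_scal a x) y;
  ca_scalMr : forall a x y, ca_scal a (ca_mul x y) = ca_mul x (ca_scal a y);
  ca_starK : forall x, ca_star (ca_star x) = x;
  ca_starD : forall x y, ca_star (ca_add x y) = ca_add (ca_star x) (ca_star y);
  ca_starM : forall x y, ca_star (ca_mul x y) = ca_mul (ca_star y) (ca_star x);
  ca_starZ : forall a x, ca_star (ca_scal a x) = ca_scal (Cconj a) (ca_star x);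
  ca_norm_ge0 : forall x, (0 <= ca_norm x)%R;
  ca_norm_eq0 : forall x, ca_norm x = 0%R -> x = ca_zero;
  ca_normD : forall x y, (ca_norm (ca_add x y) <= ca_norm x + ca_norm y)%R;
  ca_normZ : forall a x, ca_norm (ca_scal a x) = (Cmod a * ca_norm x)%R;
  ca_normM : forall x y, (ca_norm (ca_mul x y) <= ca_norm x * ca_norm y)%R;
  ca_cstar : forall x, ca_norm (ca_mul (ca_star x) x) = (ca_norm x * ca_norm x)%R;
  ca_complete : forall s : nat -> ca_car,
    (forall eps, (0 < eps)%R -> exists N, forall m n, (N <= m)%nat -> (N <= n)%nat ->
        (ca_norm (ca_add (s m) (ca_opp (s n))) < eps)%R) ->
    exists l, forall eps, (0 < eps)%R -> exists N, forall n, (N <= n)%nat ->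
        (ca_norm (ca_add (s n) (ca_opp l)) < eps)%R
}.

Definition simple_graph (n : nat) (adj : rel 'I_n) : Prop :=
  (forall i j, adj i j = adj j i) /\ (forall i, ~~ adj i i).

Definition strongly_regular (n : nat) (adj : rel 'I_n) (k lam mu : nat) : Prop :=
  [/\ (forall v, #|[set w | adj v w]| = k),
      (forall v w, adj v w -> #|[set x | adj v x && adj w x]| = lam) &
      (forall v w, v != w -> ~~ adj v w -> #|[set x | adj v x && adj w x]| = mu)].

Definition has_cycle_of_length (n : nat) (adj : rel 'I_n) (m : nat) : Prop :=
  (3 <= m)%nat /\
  exists c : nat -> 'I_n,
    (forall i j, (i < m)%nat -> (j < m)%nat -> c i = c j -> i = j) /\
    (forall i, (i < m)%nat -> adj (c i) (c ((i.+1) %% m))).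

Definition girth_eq (n : nat) (adj : rel 'I_n) (g : nat) : Prop :=
  has_cycle_of_length adj g /\ (forall m, (m < g)%nat -> ~ has_cycle_of_length adj m).

(* Relations (R1)-(R3) of C(G_aut^+(Gamma)) realised in a C*-algebra A. *)
Definition ca_sum (A : CStarAlgebra) (n : nat) (f : 'I_n -> A) : A :=
  \big[@ca_add A / @ca_zero A]_(l < n) f l.

Definition quantum_aut_rep (n : nat) (adj : rel 'I_n) (A : CStarAlgebra)
    (u : 'I_n -> 'I_n -> A) : Prop :=
  [/\ (forall i j, ca_star (u i j) = u i j /\ ca_mul (u i j) (u i j) = u i j),
      (forall i, ca_sum (fun l => u i l) = @ca_one A /\ ca_sum (fun l => u l i) = @ca_one A) &
      (forall i j k l, adj i k != adj j l ->
          ca_mul (u i j) (u k l) = @ca_zero A /\ ca_mul (u k l) (u i j) = @ca_zero A)].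

(* C(G_aut^+(Gamma)) is commutative  <=>  the generators commute in the
   universal C*-algebra  <=>  in every unital C*-algebra, every family
   satisfying (R1)-(R3) consists of pairwise commuting elements. *)
Definition no_quantum_symmetry (n : nat) (adj : rel 'I_n) : Prop :=
  forall (A : CStarAlgebra) (u : 'I_n -> 'I_n -> A),
    quantum_aut_rep adj u ->
    forall i j k l, ca_mul (u i j) (u k l) = ca_mul (u k l) (u i j).

(* The entries of a magic unitary are projections summing to one along each row
   and column, hence orthogonal within a row or a column: a compression [e q e]
   of such projections vanishes because a self-adjoint [g] in the corner of a
   projection [e] with [|e + g|, |e - g| <= 1] is zero.
   Now let the graph be triangle-free, with exactly one common neighbour for any
   two distinct non-adjacent vertices and no vertex of degree one.  Relation (R3)
   allows one to insert the generator [u x y] of the common neighbours [x], [y]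
   into a product [u a b u c d].  For adjacent [i], [k] this yields [p q p = p q]
   for [p = u i j], [q = u k l], hence [p q = q p]; for [i], [k] at distance two
   the product is routed through neighbourhood sums that commute by the adjacent
   case.  Strongly regular graphs of girth five and the Hoffman-Singleton graph
   are such graphs: their parameters are [(k, 0, 1)] with [k >= 2]. *)

From HB Require Import structures.
From mathcomp Require Import all_boot.
From Stdlib Require Import Reals Lra.

Set Implicit Arguments.
Unset Strict Implicit.
Unset Printing Implicit Defensive.

Lemma Cx_ext (a b : Cx) : cre a = cre b -> cim a = cim b -> a = b.
Proof. by case: a => ? ?; case: b => ? ? /= -> ->. Qed.

Definition Creal (r : R) : Cx := mkCx r 0.

Lemma Creal_add (r s : R) : Cadd (Creal r) (Creal s) = Creal (r + s).
Proof. by apply: Cx_ext => /=; lra. Qed.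

Lemma Creal_mul (r s : R) : Cmul (Creal r) (Creal s) = Creal (r * s).
Proof. by apply: Cx_ext => /=; lra. Qed.

Lemma Cconj_real (r : R) : Cconj (Creal r) = Creal r.
Proof. by apply: Cx_ext => /=; lra. Qed.

Lemma Cmod_real (r : R) : Cmod (Creal r) = Rabs r.
Proof. by rewrite /Cmod /= Rmult_0_l Rplus_0_r sqrt_Rsqr_abs. Qed.

Lemma pow2_bound_eq0 (x : R) : (0 <= x)%R -> (forall n, 2 ^ n * x <= 1)%R -> x = 0%R.
Proof.
move=> x_ge0 bound; case: (Rle_lt_or_eq_dec _ _ x_ge0) => // x_gt0.
have [N N_gt] := INR_archimed x 1 x_gt0.
have N_le : (INR N <= 2 ^ N)%R.
  elim: (N) => [|m IH]; first by rewrite /=; lra.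
  rewrite S_INR /=; have := pow_R1_Rle 2 m; lra.
have := bound N; nra.
Qed.

Section CStarAlgebra.
Variable A : CStarAlgebra.
Local Notation "x +. y" := (@ca_add A x y) (at level 50, left associativity).
Local Notation "-. x" := (@ca_opp A x) (at level 35, right associativity).
Local Notation "x -. y" := (x +. -. y) (at level 50, left associativity).
Local Notation "x *. y" := (@ca_mul A x y) (at level 40, left associativity).
Local Notation "a *: x" := (@ca_scal A a x) (at level 40).
Local Notation "x ^*" := (@ca_star A x).
Local Notation "`| x |" := (@ca_norm A x).
Local Notation ca0 := (@ca_zero A).
Local Notation ca1 := (@ca_one A).
Local Open Scope R_scope.

HB.instance Definition _ := Monoid.isComLaw.Build A ca0 (@ca_add A)
  (fun x y z => ca_addA x y z) (fun x y => ca_addC x y) (fun x => ca_add0 x).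

Lemma ca_addr0 x : x +. ca0 = x. Proof. by rewrite ca_addC ca_add0. Qed.
Lemma ca_addNr x : -. x +. x = ca0. Proof. by rewrite ca_addC ca_addN. Qed.
Lemma ca_addKr x y : -. x +. (x +. y) = y. Proof. by rewrite ca_addA ca_addNr ca_add0. Qed.
Lemma ca_addrI x y z : x +. y = x +. z -> y = z.
Proof. by move=> E; rewrite -(ca_addKr x y) E ca_addKr. Qed.
Lemma ca_addACA x y z t : (x +. y) +. (z +. t) = (x +. z) +. (y +. t).
Proof. by rewrite -!ca_addA (ca_addA y) (ca_addC y) -ca_addA. Qed.
Lemma ca_addr_eq0 x y : x +. y = ca0 -> y = -. x.
Proof. by move=> E; apply: (@ca_addrI x); rewrite E ca_addN. Qed.
Lemma ca_oppK x : -. -. x = x.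
Proof. by symmetry; apply: ca_addr_eq0; rewrite ca_addNr. Qed.
Lemma ca_oppD x y : -. (x +. y) = -. x -. y.
Proof.
symmetry; apply: ca_addr_eq0.
by rewrite (ca_addC (-. x)) ca_addA -(ca_addA x) ca_addN ca_addr0 ca_addN.
Qed.
Lemma ca_opp0 : -. ca0 = ca0.
Proof. by symmetry; apply: ca_addr_eq0; rewrite ca_add0. Qed.

Lemma ca_mul0r x : ca0 *. x = ca0.
Proof. by apply: (@ca_addrI (ca0 *. x)); rewrite -ca_mulDl !ca_addr0. Qed.
Lemma ca_mulr0 x : x *. ca0 = ca0.
Proof. by apply: (@ca_addrI (x *. ca0)); rewrite -ca_mulDr !ca_addr0. Qed.
Lemma ca_mulNr x y : -. x *. y = -. (x *. y).
Proof. by apply: ca_addr_eq0; rewrite -ca_mulDl ca_addN ca_mul0r. Qed.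
Lemma ca_mulrN x y : x *. -. y = -. (x *. y).
Proof. by apply: ca_addr_eq0; rewrite -ca_mulDr ca_addN ca_mulr0. Qed.

Lemma ca_scaler0 a : a *: ca0 = ca0.
Proof. by apply: (@ca_addrI (a *: ca0)); rewrite -ca_scalDr !ca_addr0. Qed.
Lemma ca_scale0r x : Creal 0 *: x = ca0.
Proof.
by apply: (@ca_addrI (Creal 0 *: x)); rewrite -ca_scalDl Creal_add Rplus_0_r ca_addr0.
Qed.
Lemma ca_scaleN1 x : Creal (-1) *: x = -. x.
Proof.
apply: ca_addr_eq0; rewrite -{1}(ca_scal1 x) -ca_scalDl.
by rewrite (_ : Cadd _ _ = Creal 0) ?ca_scale0r //; apply: Cx_ext => /=; lra.
Qed.
Lemma ca_scalerN a x : a *: -. x = -. (a *: x).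
Proof. by apply: ca_addr_eq0; rewrite -ca_scalDr ca_addN ca_scaler0. Qed.
Lemma ca_scale_real_eq0 r x : r <> 0 -> Creal r *: x = ca0 -> x = ca0.
Proof.
move=> r_neq0 rx0; rewrite -(ca_scal1 x).
rewrite (_ : Cone = Cmul (Creal (/ r)) (Creal r)) ?ca_scalM ?rx0 ?ca_scaler0 //.
by rewrite Creal_mul Rinv_l.
Qed.

Lemma ca_star0 : ca0^* = ca0.
Proof. by apply: (@ca_addrI ca0^*); rewrite -ca_starD !ca_addr0. Qed.
Lemma ca_star1 : ca1^* = ca1.
Proof.
transitivity (ca1^* *. (ca1^*)^*); first by rewrite ca_starK ca_mul1r.
by rewrite -ca_starM ca_mul1r ca_starK.
Qed.
Lemma ca_starN x : (-. x)^* = -. x^*.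
Proof. by apply: ca_addr_eq0; rewrite -ca_starD ca_addN ca_star0. Qed.

Lemma ca_norm0 : `|ca0| = 0.
Proof. by rewrite -(ca_scale0r ca0) ca_normZ Cmod_real Rabs_R0 Rmult_0_l. Qed.
Lemma ca_normN x : `|-. x| = `|x|.
Proof. by rewrite -ca_scaleN1 ca_normZ Cmod_real Rabs_Ropp Rabs_R1 Rmult_1_l. Qed.
Lemma ca_normZ_real r x : 0 <= r -> `|Creal r *: x| = r * `|x|.
Proof. by move=> r_ge0; rewrite ca_normZ Cmod_real Rabs_pos_eq. Qed.

Definition proj (p : A) := p^* = p /\ p *. p = p.

Lemma proj_norm_le1 p : proj p -> `|p| <= 1.
Proof.
case=> p_sa p_idem; have := ca_cstar p; rewrite p_sa p_idem => E.
have := ca_norm_ge0 p; nra.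
Qed.

Lemma proj_compl p : proj p -> proj (ca1 -. p).
Proof.
case=> p_sa p_idem; split; first by rewrite ca_starD ca_star1 ca_starN p_sa.
rewrite ca_mulDl !ca_mulDr !ca_mul1l !ca_mul1r ca_mulNr ca_mulrN ca_oppK p_idem.
by rewrite ca_addNr ca_addr0.
Qed.

Lemma proj_commute p q : proj p -> proj q -> p *. q = p *. q *. p -> p *. q = q *. p.
Proof.
case=> p_sa _ [q_sa _] pqp.
have sa : (p *. q *. p)^* = p *. q *. p by rewrite !ca_starM p_sa q_sa ca_mulA.
by rewrite pqp -sa -pqp ca_starM p_sa q_sa.
Qed.

(* [p - p q p = (p (1 - q)) ((1 - q) p)] is a product of two contractions. *)
Lemma norm_sub_compression_le1 p q : proj p -> proj q -> `|p -. p *. q *. p| <= 1.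
Proof.
move=> p_proj q_proj; have q'_proj := proj_compl q_proj.
set q' := ca1 -. q in q'_proj.
have -> : p -. p *. q *. p = (p *. q') *. (q' *. p).
  rewrite ca_mulA -(ca_mulA p q') q'_proj.2 /q' ca_mulDr ca_mul1r ca_mulrN.
  by rewrite ca_mulDl ca_mulNr p_proj.2.
have p_le1 := proj_norm_le1 p_proj; have q'_le1 := proj_norm_le1 q'_proj.
have p_ge0 := ca_norm_ge0 p; have q'_ge0 := ca_norm_ge0 q'.
have : `|p *. q'| <= 1 by have := ca_normM p q'; nra.
have : `|q' *. p| <= 1 by have := ca_normM q' p; nra.
have := ca_normM (p *. q') (q' *. p).
have := ca_norm_ge0 (p *. q'); have := ca_norm_ge0 (q' *. p).
nra.
Qed.

Lemma compression_eq0 p q : proj p -> proj q -> p *. q *. p = ca0 -> p *. q = ca0.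
Proof.
case=> p_sa _ [q_sa q_idem] pqp0.
have qp0 : q *. p = ca0.
  apply: ca_norm_eq0; have := ca_cstar (q *. p).
  rewrite ca_starM p_sa q_sa -ca_mulA (ca_mulA q) q_idem ca_mulA pqp0 ca_norm0.
  have := ca_norm_ge0 (q *. p); nra.
by rewrite -(ca_starK (p *. q)) ca_starM p_sa q_sa qp0 ca_star0.
Qed.

Lemma norm_half_sum_sq x y : `|x| <= 1 -> `|y| <= 1 ->
  `|Creal (/ 2) *: (x *. x +. y *. y)| <= 1.
Proof.
move=> x_le1 y_le1; rewrite ca_normZ_real; last lra.
have := ca_normD (x *. x) (y *. y).
have := ca_normM x x; have := ca_normM y y.
have := ca_norm_ge0 x; have := ca_norm_ge0 y.
nra.
Qed.

Section Sums.
Variables (I : Type) (r : seq I) (P : pred I).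

Lemma ca_mul_sumr (F : I -> A) x :
  x *. \big[@ca_add A/ca0]_(i <- r | P i) F i = \big[@ca_add A/ca0]_(i <- r | P i) (x *. F i).
Proof.
by apply: (big_morph (fun y => x *. y)); [move=> y z; rewrite ca_mulDr | rewrite ca_mulr0].
Qed.

Lemma ca_mul_suml (F : I -> A) x :
  (\big[@ca_add A/ca0]_(i <- r | P i) F i) *. x = \big[@ca_add A/ca0]_(i <- r | P i) (F i *. x).
Proof.
by apply: (big_morph (fun y => y *. x)); [move=> y z; rewrite ca_mulDl | rewrite ca_mul0r].
Qed.

Lemma ca_sumN (F : I -> A) :
  -. (\big[@ca_add A/ca0]_(i <- r | P i) F i) = \big[@ca_add A/ca0]_(i <- r | P i) (-. F i).
Proof.
by apply: (big_morph (fun y => -. y)); [move=> y z; rewrite ca_oppD | rewrite ca_opp0].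
Qed.

Lemma ca_sum_const x :
  \big[@ca_add A/ca0]_(i <- r | P i) x = Creal (INR (\sum_(i <- r | P i) 1%N)) *: x.
Proof.
apply: (big_rec2 (fun s k => s = Creal (INR k) *: x)); first by rewrite ca_scale0r.
move=> i s k _ ->; rewrite add1n S_INR -{1}(ca_scal1 x) -ca_scalDl.
by congr (_ *: x); apply: Cx_ext => /=; lra.
Qed.

Lemma ca_norm_sum_le (F : I -> A) : (forall i, P i -> `|F i| <= 1) ->
  `|\big[@ca_add A/ca0]_(i <- r | P i) F i| <= INR (\sum_(i <- r | P i) 1%N).
Proof.
move=> F_le1; apply: (big_rec2 (fun s k => `|s| <= INR k)); first by rewrite ca_norm0 /=; lra.
move=> i s k Pi s_le; rewrite add1n S_INR.
have := ca_normD (F i) s; have := F_le1 i Pi; lra.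
Qed.

Lemma norm_mean_le1 x (F : I -> A) : `|x| <= 1 -> (forall i, P i -> `|F i| <= 1) ->
  `|Creal (/ (INR (\sum_(i <- r | P i) 1%N) + 1)) *: (x +. \big[@ca_add A/ca0]_(i <- r | P i) F i)|
    <= 1.
Proof.
move=> x_le1 F_le1; set k := INR _; have k_ge0 : 0 <= k by apply: pos_INR.
rewrite ca_normZ_real; last by apply/Rlt_le/Rinv_0_lt_compat; lra.
apply: (Rmult_le_reg_l (k + 1)); first lra.
rewrite -Rmult_assoc Rinv_r; last lra.
have := ca_normD x (\big[@ca_add A/ca0]_(i <- r | P i) F i).
have := ca_norm_sum_le F_le1; rewrite -/k; lra.
Qed.

End Sums.

Lemma norm_convex_le1 t x y : 0 <= t <= 1 -> `|x| <= 1 -> `|y| <= 1 ->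
  `|Creal (1 - t) *: x +. Creal t *: y| <= 1.
Proof.
move=> t01 x_le1 y_le1; have := ca_normD (Creal (1 - t) *: x) (Creal t *: y).
rewrite !ca_normZ_real; try lra.
have := ca_norm_ge0 x; have := ca_norm_ge0 y; nra.
Qed.

Lemma ca_sum_only n (F : 'I_n -> A) i0 : (forall i, i != i0 -> F i = ca0) -> ca_sum F = F i0.
Proof. by move=> F0; rewrite /ca_sum (bigD1 i0) //= big1 ?ca_addr0. Qed.

(* If [e + z g] is a contraction for [z = 1, -1], then also for [z = i, -i] by
   the C*-identity; averaging squares passes from [z] and [i z] to [(1 + i) z],
   hence to all [z = 2 ^ n], which forces [g = 0]. *)
Section Perturbation.
Variables e g : A.
Hypotheses (e_proj : proj e) (g_sa : g^* = g) (e_g : e *. g = g) (g_e : g *. e = g).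

Let quad (a b c : Cx) := a *: e +. b *: g +. c *: (g *. g).

Let quadD a b c a' b' c' :
  quad a b c +. quad a' b' c' = quad (Cadd a a') (Cadd b b') (Cadd c c').
Proof. by rewrite /quad ca_addACA (ca_addACA (a *: e)) !ca_scalDl. Qed.

Let quadZ s a b c : s *: quad a b c = quad (Cmul s a) (Cmul s b) (Cmul s c).
Proof. by rewrite /quad !ca_scalDr !ca_scalM. Qed.

Let quad_lin z : e +. z *: g = quad Cone z (Creal 0).
Proof. by rewrite /quad ca_scale0r ca_addr0 ca_scal1. Qed.

Let quad_mul_lin z1 z2 :
  (e +. z1 *: g) *. (e +. z2 *: g) = quad Cone (Cadd z1 z2) (Cmul z1 z2).
Proof.
rewrite ca_mulDl !ca_mulDr e_proj.2 -ca_scalMr e_g -ca_scalMl g_e.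
rewrite -ca_scalMl -ca_scalMr -ca_scalM /quad ca_scal1 ca_scalDl -!ca_addA.
by congr (_ +. _); rewrite !ca_addA (ca_addC (z2 *: g)).
Qed.

Let ball (a b : R) := `|e +. mkCx a b *: g| <= 1.

Let ball_congr a b a' b' : ball a b -> a = a' -> b = b' -> ball a' b'.
Proof. by move=> ? <- <-. Qed.

Let ball_rot_step a b : ball a b -> ball (- b) a -> ball (a - b) (a + b).
Proof.
move=> ball_z ball_iz; have := norm_half_sum_sq ball_z ball_iz.
rewrite !quad_mul_lin quadD quadZ /ball quad_lin.
by congr (`|quad _ _ _| <= 1); apply: Cx_ext => /=; field.
Qed.

Let norm_e_add_g2_le1 : ball 1 0 -> ball (-1) 0 -> `|e +. g *. g| <= 1.
Proof.
move=> b1 bN1; have := norm_half_sum_sq b1 bN1.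
rewrite !quad_mul_lin quadD quadZ.
have -> : e +. g *. g = quad Cone (Creal 0) Cone by rewrite /quad ca_scale0r ca_addr0 !ca_scal1.
by congr (`|quad _ _ _| <= 1); apply: Cx_ext => /=; field.
Qed.

(* C*-identity: [(e + i s g)^* (e + i s g) = e + g^2]. *)
Let ball_imag s : s * s = 1 -> `|e +. g *. g| <= 1 -> ball 0 s.
Proof.
move=> s2 e_g2; rewrite /ball; set x := e +. _ *: g.
have x_star : x^* *. x = e +. g *. g.
  rewrite ca_starD ca_starZ e_proj.1 g_sa quad_mul_lin.
  rewrite (_ : e +. _ = quad Cone (Creal 0) Cone); last first.
    by rewrite /quad ca_scale0r ca_addr0 !ca_scal1.
  by congr quad; apply: Cx_ext => /=; lra.
have := ca_cstar x; rewrite x_star => E.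
have := ca_norm_ge0 x; nra.
Qed.

Let ball4 a b := [/\ ball a b, ball (- b) a, ball (- a) (- b) & ball b (- a)].

Let ball4_step a b : ball4 a b -> ball4 (a - b) (a + b).
Proof.
case=> b1 b2 b3 b4; split.
- exact: ball_rot_step.
- by apply: (ball_congr (ball_rot_step b2 b3)); lra.
- by apply: (ball_congr (ball_rot_step b3 (ball_congr b4 _ _))); lra.
- by apply: (ball_congr (ball_rot_step b4 (ball_congr b1 _ _))); lra.
Qed.

Let ball4_double a b : ball4 a b -> ball4 (2 * a) (2 * b).
Proof.
move=> /ball4_step /ball4_step [b1 b2 b3 b4]; split.
- by apply: (ball_congr b4); lra.
- by apply: (ball_congr b1); lra.
- by apply: (ball_congr b2); lra.
- by apply: (ball_congr b3); lra.
Qed.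

Lemma proj_perturbation_eq0 : `|e +. g| <= 1 -> `|e -. g| <= 1 -> g = ca0.
Proof.
move=> plus_le1 minus_le1.
have b1 : ball 1 0 by rewrite /ball ca_scal1.
have bN1 : ball (-1) 0 by rewrite /ball ca_scaleN1.
have g2_le1 := norm_e_add_g2_le1 b1 bN1.
have ball4_pow n : ball4 (2 ^ n) 0.
  elim: n => [|n IH]; last by have := ball4_double IH; rewrite Rmult_0_r.
  by split; rewrite /= ?Ropp_0 //; apply: ball_imag => //; lra.
apply: ca_norm_eq0; apply: (pow2_bound_eq0 (ca_norm_ge0 g)) => n.
have [ball_pos _ ball_neg _] := ball4_pow n.
have diff : Creal (2 * 2 ^ n) *: g = (e +. mkCx (2 ^ n) 0 *: g) -. (e +. mkCx (- 2 ^ n) (- 0) *: g).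
  rewrite -ca_scaleN1 !quad_lin quadZ quadD.
  rewrite (_ : _ *: g = quad (Creal 0) (Creal (2 * 2 ^ n)) (Creal 0)).
    by congr quad; apply: Cx_ext => /=; field.
  by rewrite /quad !ca_scale0r ca_add0 ca_addr0.
have := ca_normD (e +. mkCx (2 ^ n) 0 *: g) (-. (e +. mkCx (- 2 ^ n) (- 0) *: g)).
rewrite -diff ca_normN ca_normZ_real; last by have := pow_lt 2 n; lra.
rewrite /ball in ball_pos ball_neg; lra.
Qed.

End Perturbation.

Lemma compressions_sum_eq0 (I : finType) (P : pred I) (e : A) (q : I -> A) b :
  proj e -> (forall c, proj (q c)) ->
  \big[@ca_add A/ca0]_(c | P c) (e *. q c *. e) = ca0 -> P b -> e *. q b = ca0.
Proof.
move=> e_proj q_proj sum0 Pb; apply: (compression_eq0 e_proj (q_proj b)).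
set h := e *. q b *. e; set S := [pred c | P c && (c != b)].
set r := (\sum_(c | S c) 1)%N; set t := / (INR r + 1).
have r_ge0 := pos_INR r.
have t_gt0 : 0 < t by apply: Rinv_0_lt_compat; lra.
have t_le1 : t <= 1 by rewrite /t -Rinv_1; apply: Rinv_le_contravar; lra.
have h_rest : h = -. \big[@ca_add A/ca0]_(c | S c) (e *. q c *. e).
  by apply: ca_addr_eq0; rewrite ca_addC -[in RHS]sum0 (bigD1 b Pb).
(* [e + t h] is the mean of [e] and the [e - e q_c e] for [c] in [S]. *)
have plus_le1 : `|e +. Creal t *: h| <= 1.
  have -> : e +. Creal t *: h =
      Creal t *: (e +. \big[@ca_add A/ca0]_(c | S c) (e -. e *. q c *. e)).
    rewrite big_split /= -ca_sumN ca_sum_const -/r -h_rest.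
    rewrite !ca_scalDr ca_addA -ca_scalM -ca_scalDl; congr (_ +. _).
    rewrite -{1}(ca_scal1 e); congr (_ *: e).
    by apply: Cx_ext => /=; rewrite /t; field; lra.
  exact: (@norm_mean_le1 _ _ S _ _ (proj_norm_le1 e_proj)
    (fun c _ => norm_sub_compression_le1 e_proj (q_proj c))).
have minus_le1 : `|e -. Creal t *: h| <= 1.
  have -> : e -. Creal t *: h = Creal (1 - t) *: e +. Creal t *: (e -. h).
    rewrite ca_scalDr ca_scalerN ca_addA -ca_scalDl Creal_add.
    by rewrite (_ : 1 - t + t = 1) ?ca_scal1 //; lra.
  apply: norm_convex_le1; first lra.
    exact: proj_norm_le1.
  exact: norm_sub_compression_le1.
have th0 : Creal t *: h = ca0.
  apply: (proj_perturbation_eq0 e_proj) => //.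
  - by rewrite ca_starZ Cconj_real /h !ca_starM e_proj.1 (q_proj b).1 ca_mulA.
  - by rewrite -ca_scalMr /h !ca_mulA e_proj.2.
  - by rewrite -ca_scalMl /h -!ca_mulA e_proj.2.
by apply: (ca_scale_real_eq0 _ th0); lra.
Qed.

Lemma partition_of_unity_orth n (p : 'I_n -> A) a b :
  (forall c, proj (p c)) -> ca_sum p = ca1 -> a != b -> p a *. p b = ca0.
Proof.
move=> p_proj sum1 ab.
apply: (compressions_sum_eq0 (P := predC1 a)) => //; last by rewrite /= eq_sym.
have : \big[@ca_add A/ca0]_c (p a *. p c *. p a) = p a.
  by rewrite -ca_mul_suml -ca_mul_sumr -/(ca_sum p) sum1 ca_mul1r (p_proj a).2.
rewrite (bigD1 a) //= !(p_proj a).2 => sum_pa.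
by apply: (@ca_addrI (p a)); rewrite ca_addr0.
Qed.

Section QuantumAutomorphisms.
Variables (n : nat) (adj : rel 'I_n) (u : 'I_n -> 'I_n -> A).
Hypothesis u_qaut : quantum_aut_rep adj u.

Lemma u_proj i j : proj (u i j).
Proof. by case: u_qaut => u_proj _ _; apply: u_proj. Qed.

Lemma u_row_sum i : ca_sum (fun l => u i l) = ca1.
Proof. by case: u_qaut => _ u_sum _; case: (u_sum i). Qed.

Lemma u_col_sum j : ca_sum (fun l => u l j) = ca1.
Proof. by case: u_qaut => _ u_sum _; case: (u_sum j). Qed.

Lemma u_mul_eq0 i j k l : adj i k != adj j l -> u i j *. u k l = ca0.
Proof. by case: u_qaut => _ _ u_rel /u_rel []. Qed.

Lemma u_row_orth i j l : j != l -> u i j *. u i l = ca0.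
Proof. exact: (partition_of_unity_orth (fun c => u_proj i c) (u_row_sum i)). Qed.

Lemma u_col_orth i k j : i != k -> u i j *. u k j = ca0.
Proof. exact: (partition_of_unity_orth (fun c => u_proj c j) (u_col_sum j)). Qed.

Lemma u_insert_row x a b c d : u a b *. u c d = ca_sum (fun t => u a b *. u x t *. u c d).
Proof.
rewrite -{1}(ca_mul1l (u c d)) -(u_row_sum x) /ca_sum ca_mul_suml ca_mul_sumr.
by apply: eq_bigr => t _; rewrite ca_mulA.
Qed.

Lemma u_insert_col y a b c d : u a b *. u c d = ca_sum (fun t => u a b *. u t y *. u c d).
Proof.
rewrite -{1}(ca_mul1l (u c d)) -(u_col_sum y) /ca_sum ca_mul_suml ca_mul_sumr.
by apply: eq_bigr => t _; rewrite ca_mulA.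
Qed.

Hypothesis adj_sym : forall i j, adj i j = adj j i.
Hypothesis triangle_free : forall a b c, adj a b -> adj a c -> ~~ adj b c.
Hypothesis common_neighbour : forall a b, a != b -> ~~ adj a b ->
  exists x, [/\ adj a x, adj b x & forall t, adj a t -> adj b t -> t = x].
Hypothesis no_leaf : forall i m, adj i m -> exists2 z, adj i z & z != m.

Lemma common_neighbour_unique a c x : a != c -> ~~ adj a c -> adj a x -> adj c x ->
  forall t, adj a t -> adj c t -> t = x.
Proof.
move=> ac nac ax cx t at_ ct; have [y [_ _ y_unique]] := common_neighbour ac nac.
by rewrite (y_unique t at_ ct) (y_unique x ax cx).
Qed.

(* Only the term [t = x] of [u_insert_col y] survives. *)
Lemma u_insert_common_neighbour_src a b c d x y :
  (forall t, adj a t -> adj c t -> t = x) -> adj b y -> adj d y ->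
  u a b *. u c d = u a b *. u x y *. u c d.
Proof.
move=> x_unique by_ dy; rewrite (u_insert_col y); apply: ca_sum_only => t tx.
have [at_|nat] := boolP (adj a t); last by rewrite u_mul_eq0 ?ca_mul0r // (negbTE nat) by_.
have nct : adj c t = false by apply: contraNF tx => ct; apply/eqP/x_unique.
by rewrite -ca_mulA u_mul_eq0 ?ca_mulr0 // (adj_sym t c) nct (adj_sym y d) dy.
Qed.

Lemma u_insert_common_neighbour_dst a b c d x y :
  (forall t, adj b t -> adj d t -> t = y) -> adj a x -> adj c x ->
  u a b *. u c d = u a b *. u x y *. u c d.
Proof.
move=> y_unique ax cx; rewrite (u_insert_row x); apply: ca_sum_only => t ty.
have [bt|nbt] := boolP (adj b t); last by rewrite u_mul_eq0 ?ca_mul0r // ax (negbTE nbt).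
have ndt : adj d t = false by apply: contraNF ty => dt; apply/eqP/y_unique.
by rewrite -ca_mulA u_mul_eq0 ?ca_mulr0 // (adj_sym x c) cx (adj_sym t d) ndt.
Qed.

Lemma u_mul3_eq0 i j k l c : adj i k -> adj j l -> adj k c -> c != i ->
  u i j *. u k l *. u c j = ca0.
Proof.
move=> ik jl kc ci; have ic : i != c by rewrite eq_sym.
have nic : adj i c = false by apply/negbTE/(triangle_free (a := k)); rewrite // adj_sym.
rewrite (u_insert_row c) /ca_sum ca_mul_suml big1 // => y _.
have [->|yj] := eqVneq y j; first by rewrite u_col_orth ?ca_mul0r.
have [jy|njy] := boolP (adj j y); first by rewrite u_mul_eq0 ?ca_mul0r // nic jy.
have [ly|nly] := boolP (adj l y); last first.
  rewrite -(ca_mulA (u i j)) (u_mul_eq0 (i := c)) ?ca_mulr0 ?ca_mul0r //.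
  by rewrite (adj_sym c k) kc (adj_sym y l) (negbTE nly).
have l_unique : forall t, adj y t -> adj j t -> t = l.
  by apply: common_neighbour_unique; rewrite // adj_sym.
have cycj : u c y *. u k l *. u c j = ca0.
  by rewrite -(u_insert_common_neighbour_dst l_unique) ?u_row_orth // adj_sym.
by rewrite -!ca_mulA (ca_mulA (u c y)) cycj ca_mulr0.
Qed.

Lemma u_mul_absorb_adj i j k l : adj i k -> adj j l -> u i j *. u k l = u i j *. u k l *. u i j.
Proof.
move=> ik jl; transitivity (ca_sum (fun c => u i j *. u k l *. u c j)).
  by rewrite /ca_sum -ca_mul_sumr -/(ca_sum (fun c => u c j)) u_col_sum ca_mul1r.
apply: ca_sum_only => c ci; have [kc|nkc] := boolP (adj k c); first exact: u_mul3_eq0.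
by rewrite -ca_mulA u_mul_eq0 ?ca_mulr0 // (negbTE nkc) adj_sym jl.
Qed.

Lemma u_commute_adj i j k l : adj i k -> u i j *. u k l = u k l *. u i j.
Proof.
move=> ik; have [jl|njl] := boolP (adj j l).
  exact: (proj_commute (u_proj i j) (u_proj k l) (u_mul_absorb_adj ik jl)).
rewrite !u_mul_eq0 //.
- by rewrite (adj_sym k i) ik (adj_sym l j) (negbTE njl).
- by rewrite ik (negbTE njl).
Qed.

(* The [(z, b)] entry of [u] times the adjacency matrix. *)
Definition nbr_sum z b := ca_sum (fun w => if adj b w then u z w else ca0).

Lemma nbr_sum_mul a b z m m' : adj a m -> adj b m' -> adj a z -> z != m ->
  nbr_sum z b *. u m m' = u a b *. u m m'.
Proof.
move=> am bm' az zm; have nzm := triangle_free az am.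
transitivity (ca_sum (fun w => u z w *. (u a b *. u m m'))); last first.
  by rewrite /ca_sum -ca_mul_suml -/(ca_sum (fun w => u z w)) u_row_sum ca_mul1l.
rewrite /nbr_sum /ca_sum ca_mul_suml; apply: eq_bigr => w _.
have [bw|nbw] := boolP (adj b w); last first.
  by rewrite ca_mul0r ca_mulA u_mul_eq0 ?ca_mul0r // (adj_sym z a) az (adj_sym w b) (negbTE nbw).
have [->|wm'] := eqVneq w m'.
  by rewrite (u_commute_adj _ _ am) ca_mulA u_col_orth // ca_mul0r.
have a_unique : forall t, adj z t -> adj m t -> t = a.
  by apply: common_neighbour_unique; rewrite // adj_sym.
by rewrite (u_insert_common_neighbour_src a_unique (y := b)) ?ca_mulA // adj_sym.
Qed.

Lemma nbr_sum_commute z z' b b' : adj z z' ->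
  nbr_sum z b *. nbr_sum z' b' = nbr_sum z' b' *. nbr_sum z b.
Proof.
move=> zz'; rewrite /nbr_sum /ca_sum ca_mul_suml.
under eq_bigr do rewrite ca_mul_sumr.
rewrite exchange_big ca_mul_suml; apply: eq_bigr => w' _.
rewrite ca_mul_sumr; apply: eq_bigr => w _.
by case: (adj b w); case: (adj b' w'); rewrite ?ca_mul0r ?ca_mulr0 // u_commute_adj.
Qed.

(* Route [u i j u k l] through [u m m'], where [m] and [m'] are the common
   neighbours of [i, k] and of [j, l]; next to [u m m'], the generators [u i j]
   and [u k l] may be replaced by [nbr_sum z j] and [nbr_sum z' l], which
   commute because [z ~ z']. *)
Lemma u_commute_far i j k l : i != k -> ~~ adj i k -> j != l -> ~~ adj j l ->
  u i j *. u k l = u k l *. u i j.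
Proof.
move=> ik nik jl njl.
have [m [im km m_unique]] := common_neighbour ik nik.
have [m' [jm' lm' _]] := common_neighbour jl njl.
have [z iz zm] := no_leaf im.
have zk : z != k by apply: contraNneq nik => <-.
have nzk : ~~ adj z k.
  by apply: contra_neqN zm => zk'; apply: m_unique; rewrite // adj_sym.
have [z' [zz' kz' _]] := common_neighbour zk nzk.
have z'm : z' != m by apply: contraNneq (triangle_free iz im) => <-.
have E0 := nbr_sum_mul im jm' iz zm.
have E1 := nbr_sum_mul km lm' kz' z'm.
rewrite (u_insert_common_neighbour_src m_unique jm' lm') -E0 -ca_mulA.
rewrite -(u_commute_adj _ _ km) -E1 ca_mulA (nbr_sum_commute _ _ zz') -ca_mulA E0.
rewrite (u_commute_adj _ _ im) ca_mulA E1.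
by rewrite -(u_insert_common_neighbour_src (fun t kt it => m_unique t it kt) lm' jm').
Qed.

Lemma u_commute i j k l : u i j *. u k l = u k l *. u i j.
Proof.
have [<-|ik] := eqVneq i k.
  by have [<-//|jl] := eqVneq j l; rewrite !u_row_orth // eq_sym.
have [<-|jl] := eqVneq j l; first by rewrite !u_col_orth // eq_sym.
have [adj_ik|nik] := boolP (adj i k); first exact: u_commute_adj.
have [adj_jl|njl] := boolP (adj j l); last exact: u_commute_far.
rewrite !u_mul_eq0 //.
- by rewrite (adj_sym k i) (negbTE nik) (adj_sym l j) adj_jl.
- by rewrite (negbTE nik) adj_jl.
Qed.

End QuantumAutomorphisms.

End CStarAlgebra.

Lemma srg_0_1_no_quantum_symmetry n (adj : rel 'I_n) k :
  (forall i j, adj i j = adj j i) -> strongly_regular adj k 0 1 -> 1 < k ->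
  no_quantum_symmetry adj.
Proof.
move=> adj_sym [deg lam0 mu1] k_gt1 A u u_qaut; apply: (u_commute u_qaut adj_sym).
- move=> a b c ab ac; apply/negP => bc.
  by have := lam0 a b ab; rewrite (cardD1 c) inE ac bc.
- move=> a b ab nab.
  have /cards1P [x common_x] : #|[set y | adj a y && adj b y]| == 1 by rewrite mu1.
  have : x \in [set y | adj a y && adj b y] by rewrite common_x set11.
  rewrite inE => /andP [ax bx]; exists x; split => // t at_ bt.
  by apply/set1P; rewrite -common_x inE at_ bt.
- move=> i m _; have /card_gt1P [x [y [ix iy xy]]] : 1 < #|[set w | adj i w]| by rewrite deg.
  rewrite !inE in ix iy; have [xm|] := eqVneq x m; last by exists x.
  by exists y; rewrite // -xm eq_sym.
Qed.

Section GirthFive.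
Variables (n : nat) (adj : rel 'I_n).
Hypothesis adj_simple : simple_graph adj.

Lemma adj_neq a b : adj a b -> a != b.
Proof. by apply: contraTneq => ->; case: adj_simple. Qed.

Lemma triangle_cycle a b c : adj a b -> adj b c -> adj c a -> has_cycle_of_length adj 3.
Proof.
move=> ab bc ca; split => //.
exists (fun t => match t with 0 => a | 1 => b | _ => c end); split; last first.
  by case=> [|[|[|i]]] //= _.
have ab' := adj_neq ab; have bc' := adj_neq bc; have ca' := adj_neq ca.
by move=> [|[|[|i]]] [|[|[|j]]] //= _ _ E; subst; rewrite ?eqxx in ab' bc' ca'.
Qed.

Lemma square_cycle a x b t : adj a x -> adj x b -> adj b t -> adj t a -> a != b -> x != t ->
  has_cycle_of_length adj 4.
Proof.
move=> ax xb bt ta ab xt; split => //.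
exists (fun s => match s with 0 => a | 1 => x | 2 => b | _ => t end); split; last first.
  by case=> [|[|[|[|i]]]] //= _.
have ax' := adj_neq ax; have xb' := adj_neq xb; have bt' := adj_neq bt; have ta' := adj_neq ta.
by move=> [|[|[|[|i]]]] [|[|[|[|j]]]] //= _ _ E; subst; rewrite ?eqxx in ax' xb' bt' ta' ab xt.
Qed.

Lemma girth5_srg_params k lam mu : strongly_regular adj k lam mu -> girth_eq adj 5 ->
  [/\ lam = 0, mu = 1 & 1 < k].
Proof.
case: adj_simple => adj_sym _ [deg lam_def mu_def] [[_ [c [c_inj c_adj]]] no_short].
have c01 : adj (c 0) (c 1) := c_adj 0 erefl.
have c12 : adj (c 1) (c 2) := c_adj 1 erefl.
have c02 : c 0 != c 2 by apply/eqP => /(c_inj 0 2 erefl erefl).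
have no_triangle a b d : adj a b -> adj b d -> ~~ adj d a.
  by move=> ab bd; apply/negP => da; apply: (no_short 3) => //; apply: triangle_cycle ab bd da.
have nc02 : ~~ adj (c 0) (c 2) by rewrite adj_sym (no_triangle _ _ _ c01 c12).
split.
- rewrite -(lam_def _ _ c01); apply/eqP; rewrite cards_eq0; apply/eqP/setP => x.
  rewrite !inE; apply/negbTE/negP => /andP [c0x c1x].
  by move: (no_triangle _ _ _ c01 c1x); rewrite adj_sym c0x.
- rewrite -(mu_def _ _ c02 nc02).
  suff -> : [set x | adj (c 0) x && adj (c 2) x] = [set c 1] by rewrite cards1.
  apply/setP => x.
  rewrite !inE; apply/andP/eqP => [[c0x c2x]|->]; last by rewrite c01 adj_sym c12.
  apply/eqP/negPn/negP => c1x; apply: (no_short 4) => //.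
  by apply: (square_cycle c01 c12 c2x) => //; rewrite 1?adj_sym 1?eq_sym.
- by rewrite -(deg (c 1)); apply/card_gt1P; exists (c 0), (c 2); rewrite !inE adj_sym c01 c12.
Qed.

End GirthFive.

Theorem theorem4p9 :
  (forall (n : nat) (adj : rel 'I_n) (k lam mu : nat),
      simple_graph adj -> strongly_regular adj k lam mu -> girth_eq adj 5 ->
      no_quantum_symmetry adj) /\
  (forall adj : rel 'I_50,
      simple_graph adj -> strongly_regular adj 7 0 1 -> no_quantum_symmetry adj).
Proof.
split=> [n adj k lam mu simple srg girth5 | adj [adj_sym _] srg].
  have [lam0 mu1 k_gt1] := girth5_srg_params simple srg girth5; subst lam mu.
  case: simple => adj_sym _; exact: (srg_0_1_no_quantum_symmetry adj_sym srg k_gt1).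
exact: (srg_0_1_no_quantum_symmetry adj_sym srg isT).
Qed.
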